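(* Let $\mathcal{A}$ be a pOC with state set $Q$ whose underlying chain $\mathcal{X}$ is strongly connected, with trend $t>0$. Let $v$ be a potential and $|v|=v_{\max}-v_{\min}$. Let $$a:=\exp\left(-\frac{t^2}{2(|v|+t+1)^2}\right),$$ so that $0<a<1$. Let $c^{(0)}\ge|v|$ be an integer. Then $$[p^{(0)}(c^{(0)}){\downarrow}]\le\frac{a^{c^{(0)}}}{1-a}\quad\text{for all } p^{(0)}\in Q.$$ Moreover, if $c^{(0)}\ge6(|v|+t+1)^3/t^3$, then $[p^{(0)}(c^{(0)}){\downarrow}]\le1/2$ for all $p^{(0)}\in Q$.
   Context: A pOC is $\mathcal{A}=(Q,\delta^{=0},\delta^{>0},P^{=0},P^{>0})$ with the following components. - $\delta^{>0}\subseteq Q\times\{-1,0,1\}\times Q$ are the positive rules and $\delta^{=0}\subseteq Q\times\{0,1\}\times Q$ are the zero rules. Every state has both kinds of outgoing rule. - $P^{>0}$ and $P^{=0}$ are positive probability distributions over the outgoing rules of each state. $\mathcal{M}_\mathcal{A}$ is the Markov chain on configurations $p(i)$ with the following transitions: - $p(0)\to q(c)$ with probability $P^{=0}(p,c,q)$; - for $i\ge1$, $p(i)\to q(i+c)$ with probability $P^{>0}(p,c,q)$. $[r(c){\downarrow}]$ is the probability that a run initiated in $r(c)$ eventually reaches counter value zero. $\mathcal{X}$ is the finite Markov chain on $Q$ with transition matrix $A_{pq}=\sum_cP^{>0}(p,c,q)$. With $\alpha$ its invariant distribution and $s_p=\sum_{(p,c,q)\in\delta^{>0}}P^{>0}(p,c,q)c$,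 the trend is $t=\alpha s$. A potential is $v\in\mathbb{R}^Q$ with $s+Av=v+\mathbf{1}t$. $v_{\max}$ and $v_{\min}$ are its largest and smallest components. *)

From HB Require Import structures.
From mathcomp Require Import all_boot all_order all_algebra.
From mathcomp Require Import all_classical all_reals all_analysis.
Set Implicit Arguments. Unset Strict Implicit. Unset Printing Implicit Defensive.
Import Order.TTheory GRing.Theory Num.Theory.
Local Open Scope ring_scope.

Section POC.
Variables (R : realType) (Q : finType).

(* Counter effects: a rule (p, c, q) is encoded by the probability
   P p c q; the rule belongs to delta iff P p c q > 0. *)
Definition effects : seq int := [:: -1; 0; 1].

(* Pz p c q = P^{=0}(p,c,q), Pp p c q = P^{>0}(p,c,q). *)
Definition is_pOC (Pz Pp : Q -> int -> Q -> R) : Prop :=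
  [/\ forall p c q, 0 <= Pz p c q /\ 0 <= Pp p c q,
      forall p c q, c \notin [:: 0; 1] -> Pz p c q = 0,
      forall p c q, c \notin effects -> Pp p c q = 0,
      forall p, \sum_(c <- effects) \sum_(q : Q) Pz p c q = 1 &
      forall p, \sum_(c <- effects) \sum_(q : Q) Pp p c q = 1].

Definition Amat (Pp : Q -> int -> Q -> R) (p q : Q) : R :=
  \sum_(c <- effects) Pp p c q.

Definition svec (Pp : Q -> int -> Q -> R) (p : Q) : R :=
  \sum_(c <- effects) \sum_(q : Q) Pp p c q * c%:~R.

Definition strongly_connected (Pp : Q -> int -> Q -> R) : Prop :=
  forall p q, connect [rel x y | 0 < Amat Pp x y] p q.

Definition invariant_dist (Pp : Q -> int -> Q -> R) (alpha : Q -> R) : Prop :=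
  [/\ forall q, 0 <= alpha q,
      \sum_(q : Q) alpha q = 1 &
      forall q, \sum_(p : Q) alpha p * Amat Pp p q = alpha q].

Definition trend (Pp : Q -> int -> Q -> R) (alpha : Q -> R) : R :=
  \sum_(p : Q) alpha p * svec Pp p.

Definition potential (Pp : Q -> int -> Q -> R) (t : R) (v : Q -> R) : Prop :=
  forall p, svec Pp p + \sum_(q : Q) Amat Pp p q * v q = v p + t.

(* |v| = v_max - v_min, written as the maximal difference v p - v q
   (equal to v_max - v_min for nonempty Q). *)
Definition vspan (v : Q -> R) : R :=
  \big[Num.max/0]_(p : Q) \big[Num.max/0]_(q : Q) (v p - v q).

(* hit n p i = probability that the run of M_A from p(i) reaches counter
   value zero within at most n steps. *)
Fixpoint hit (Pp : Q -> int -> Q -> R) (n : nat) (p : Q) (i : nat) : R :=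
  match n with
  | 0%N => if i == 0%N then 1 else 0
  | n'.+1 => if i == 0%N then 1 else
      \sum_(c <- effects) \sum_(q : Q) Pp p c q * hit Pp n' q (absz (i%:Z + c))
  end.

(* [p(i)↓]: probability of eventually reaching counter value zero
   = supremum (increasing limit) of the probabilities of reaching it
   within n steps. *)
Definition reach_zero (Pp : Q -> int -> Q -> R) (p : Q) (i : nat) : R :=
  sup (range (fun n => hit Pp n p i)).

End POC.

From HB Require Import structures.
From mathcomp Require Import all_boot all_order all_algebra.
From mathcomp Require Import all_classical all_reals all_analysis.
From mathcomp Require Import ring lra zify.
Set Implicit Arguments. Unset Strict Implicit. Unset Printing Implicit Defensive.
Import Order.TTheory GRing.Theory Num.Theory.
Local Open Scope ring_scope.

(* The potential turns the counter into a process with constant drift: along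
   positive steps, [c + v q - v p] has mean [t] and magnitude at most
   [|v| + 1].  For [theta = t^2 / (2 (|v| + t + 1)^2)] this makes
   [expR (- theta (i + v p - max v))] superharmonic on positive counter
   values, and it is at least 1 at counter value zero, so it dominates the
   probability of ever hitting zero.  From [p(c0)] this yields the bound
   [expR (- theta (c0 - |v|))], and elementary estimates on [expR] turn it
   into the two stated bounds. *)

(* [expR y <= 1 / (1 - y)], and [1 / (1 - y) <= 1 + y + 2 y^2] for [y <= 1/2]. *)
Lemma expR_le_quadratic (R : realType) (y : R) :
  y <= 1/2 -> expR y <= 1 + y + 2 * y ^+ 2.
Proof.
move=> hy.
have hN := expR_ge1Dx (- y); have hMN := expRxMexpNx_1 y; have h0 := expR_gt0 y.
set E := expR y in hMN h0 *; set F := expR (- y) in hN hMN *.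
have hE : E * (1 - y) <= 1 by nra.
nra.
Qed.

Lemma expRN_le_half (R : realType) (y : R) : 1 <= y -> expR (- y) <= 1/2.
Proof.
move=> hy; have := expR_ge1Dx y; have := expRxMexpNx_1 y; have := expR_gt0 (- y).
nra.
Qed.

(* [1 - expR (- x) <= x <= 1 - y] and [(1 - y) expR y <= 1]. *)
Lemma mulr_1BexpRN_expR_le1 (R : realType) (x y : R) :
  x + y <= 1 -> (1 - expR (- x)) * expR y <= 1.
Proof.
move=> hxy.
have hx := expR_ge1Dx (- x); have hy := expR_ge1Dx (- y).
have hMN := expRxMexpNx_1 y; have hE := expR_gt0 y.
set E := expR y in hMN hE *; set F := expR (- y) in hy hMN *.
have hxE : (1 - expR (- x)) * E <= x * E by rewrite ler_pM2r //; lra.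
have hyE : (1 - y) * E <= 1 by nra.
nra.
Qed.

Section DecayRate.
Variables (R : realType) (s t : R).
Hypotheses (s_ge0 : 0 <= s) (t_gt0 : 0 < t) (t_le1 : t <= 1).

Definition decay_rate : R := t ^+ 2 / (2 * (s + t + 1) ^+ 2).

Let denom_gt0 : 0 < 2 * (s + t + 1) ^+ 2.
Proof. by apply: mulr_gt0 => //; apply: exprn_gt0; have := s_ge0; have := t_gt0; lra. Qed.

Let decay_rateE : decay_rate * (2 * (s + t + 1) ^+ 2) = t ^+ 2.
Proof. by rewrite divfK // gt_eqF. Qed.

Lemma decay_rate_gt0 : 0 < decay_rate.
Proof. by apply: divr_gt0 => //; apply: exprn_gt0. Qed.

Lemma decay_rate_step : decay_rate * (s + 1) <= 1/2.
Proof.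
rewrite -(ler_pM2r denom_gt0) mulrAC decay_rateE.
have := s_ge0; have := t_gt0; have := t_le1 => t1 t0 s0.
have t2 : t ^+ 2 <= 1 by nra.
have : s + 1 <= (s + t + 1) ^+ 2 by nra.
nra.
Qed.

Lemma decay_rate_drift : 2 * decay_rate * (s + 1) ^+ 2 <= t.
Proof.
rewrite -(ler_pM2r denom_gt0).
have -> : 2 * decay_rate * (s + 1) ^+ 2 * (2 * (s + t + 1) ^+ 2)
        = 2 * (s + 1) ^+ 2 * (decay_rate * (2 * (s + t + 1) ^+ 2)) by ring.
by rewrite decay_rateE; have := s_ge0; have := t_gt0; have := t_le1; nra.
Qed.

Lemma expR_decay_le_geometric (c0 : nat) :
  expR (- (decay_rate * (c0%:R - s))) <=
  expR (- decay_rate) ^+ c0 / (1 - expR (- decay_rate)).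
Proof.
have := decay_rate_step; have := decay_rate_gt0; set th := decay_rate => th0 th1.
rewrite ler_pdivlMr ?subr_gt0 ?expR_lt1 ?oppr_lt0 // -expRM_natl.
have -> : - (th * (c0%:R - s)) = c0%:R * - th + th * s by ring.
rewrite expRD -mulrA -[leRHS]mulr1 ler_wpM2l ?expR_ge0 // mulrC.
by apply: mulr_1BexpRN_expR_le1; lra.
Qed.

Lemma expR_decay_le_half (c0 : nat) :
  6 * (s + t + 1) ^+ 3 / t ^+ 3 <= c0%:R ->
  expR (- (decay_rate * (c0%:R - s))) <= 1/2.
Proof.
move=> c0_large; apply: expRN_le_half; move: s_ge0 t_gt0 => s0 t0.
have := decay_rate_step; have := decay_rate_gt0; set th := decay_rate => th0 th1.
have : th * (6 * (s + t + 1) ^+ 3 / t ^+ 3) = 3 * (s + t + 1) / t.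
  by rewrite /th /decay_rate; field; rewrite !gt_eqF //; lra.
have : 3 <= 3 * (s + t + 1) / t by rewrite ler_pdivlMr //; lra.
have : th * (6 * (s + t + 1) ^+ 3 / t ^+ 3) <= th * c0%:R by rewrite ler_pM2l.
nra.
Qed.

End DecayRate.

Lemma effectsP {c : int} : c \in effects -> [\/ c = -1, c = 0 | c = 1].
Proof. by rewrite !inE => /or3P[] /eqP->; [constructor 1|constructor 2|constructor 3]. Qed.

Section PositiveStep.
Variables (R : realType) (Q : finType) (Pp : Q -> int -> Q -> R).
Hypotheses (Pp_ge0 : forall p c q, 0 <= Pp p c q)
  (Pp_out : forall p c q, c \notin effects -> Pp p c q = 0)
  (Pp_sum : forall p, \sum_(c <- effects) \sum_(q : Q) Pp p c q = 1).

Definition step_mean (p : Q) (f : int -> Q -> R) : R :=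
  \sum_(c <- effects) \sum_(q : Q) Pp p c q * f c q.

Lemma step_meanD p f g :
  step_mean p (fun c q => f c q + g c q) = step_mean p f + step_mean p g.
Proof.
rewrite /step_mean -big_split; apply: eq_bigr => c _.
by rewrite -big_split; apply: eq_bigr => q _; rewrite mulrDr.
Qed.

Lemma step_meanZ p k f :
  step_mean p (fun c q => k * f c q) = k * step_mean p f.
Proof.
rewrite /step_mean mulr_sumr; apply: eq_bigr => c _.
by rewrite mulr_sumr; apply: eq_bigr => q _; rewrite mulrCA.
Qed.

Lemma step_mean_cst p k : step_mean p (fun _ _ => k) = k.
Proof.
rewrite -[RHS]mulr1 -(Pp_sum p) mulr_sumr; apply: eq_bigr => c _.
by rewrite mulr_sumr; apply: eq_bigr => q _; rewrite mulrC.
Qed.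

Lemma ler_step_mean p f g :
  (forall c q, c \in effects -> f c q <= g c q) ->
  step_mean p f <= step_mean p g.
Proof.
move=> hfg; apply: ler_sum => c _; apply: ler_sum => q _.
have [hc|hc] := boolP (c \in effects); last by rewrite Pp_out // !mul0r.
by apply: ler_wpM2l; [exact: Pp_ge0 | exact: hfg].
Qed.

Lemma svec_le1 p : svec Pp p <= 1.
Proof.
rewrite -(step_mean_cst p 1); apply: ler_step_mean => c q.
by case/effectsP => ->.
Qed.

Lemma trend_le1 alpha : invariant_dist Pp alpha -> trend Pp alpha <= 1.
Proof.
case=> alpha_ge0 alpha_sum _; rewrite /trend -alpha_sum; apply: ler_sum => p _.
by rewrite -[leRHS]mulr1 ler_wpM2l // svec_le1.
Qed.

Variables (t : R) (v : Q -> R).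
Hypothesis v_potential : potential Pp t v.

Lemma vspan_ge p q : v p - v q <= vspan v.
Proof.
apply: le_trans (le_bigmax _ _ p).
exact: (le_bigmax _ (fun q => v p - v q) q).
Qed.

Lemma vspan_ge0 : 0 <= vspan v.
Proof. exact: bigmax_ge_id. Qed.

Lemma step_mean_increment p : step_mean p (fun c q => c%:~R + v q - v p) = t.
Proof.
rewrite !step_meanD.
have -> : step_mean p (fun _ _ => - v p) = - v p by rewrite step_mean_cst.
have -> : step_mean p (fun _ q => v q) = \sum_(q : Q) Amat Pp p q * v q.
  by rewrite /step_mean exchange_big; apply: eq_bigr => q _; rewrite mulr_suml.
have <- : svec Pp p = step_mean p (fun c _ => c%:~R) by [].
have := v_potential p; lra.
Qed.

Lemma increment_bounded p q {c : int} : c \in effects ->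
  - (vspan v + 1) <= c%:~R + v q - v p <= vspan v + 1.
Proof.
move=> hc; have h1 := vspan_ge p q; have h2 := vspan_ge q p.
by apply/andP; case: (effectsP hc) => ->; rewrite ?intrN ?mulr1z ?mulr0z; split; lra.
Qed.

(* By [expR_le_quadratic] and [step_mean_increment] the mean is at most
   [1 - theta t + 2 theta^2 (|v| + 1)^2]. *)
Lemma step_mean_expR_le1 p theta :
  0 <= theta -> theta * (vspan v + 1) <= 1/2 ->
  2 * theta * (vspan v + 1) ^+ 2 <= t ->
  step_mean p (fun c q => expR (- (theta * (c%:~R + v q - v p)))) <= 1.
Proof.
move=> th0 th1 th2; set b := 2 * theta ^+ 2 * (vspan v + 1) ^+ 2.
apply: le_trans (_ : step_mean p (fun c q =>
    (1 + b) + - theta * (c%:~R + v q - v p)) <= 1).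
  apply: ler_step_mean => c q hc.
  move: (increment_bounded p q hc); set X := _ - v p => /andP[hXl hXr].
  have := @expR_le_quadratic R (- (theta * X)) ltac:(nra).
  have : X ^+ 2 <= (vspan v + 1) ^+ 2 by nra.
  rewrite /b; nra.
rewrite step_meanD step_mean_cst step_meanZ step_mean_increment /b; nra.
Qed.

Lemma absz_effect (i : nat) (c : int) : i != 0%N -> c \in effects ->
  (absz (i%:Z + c))%:R = i%:R + c%:~R :> R.
Proof.
move=> i0 hc; have h : (0 <= i%:Z + c)%R by case: (effectsP hc) => ->; lia.
by rewrite natr_absz ger0_norm // intrD pmulrn.
Qed.

Section Supermartingale.
Variables (theta K : R).
Hypotheses (theta_ge0 : 0 <= theta) (v_le_K : forall q, v q <= K).
Hypothesis superharmonic : forall p,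
  step_mean p (fun c q => expR (- (theta * (c%:~R + v q - v p)))) <= 1.

Let bound p (i : nat) := expR (- (theta * (i%:R + v p - K))).

Lemma bound_zero_ge1 p : 1 <= bound p 0.
Proof.
have := expR_ge1Dx (- (theta * (0%:R + v p - K))); rewrite /bound.
have := v_le_K p; have := theta_ge0; rewrite mulr0n add0r; nra.
Qed.

Lemma hit_le_bound n p i : hit Pp n p i <= bound p i.
Proof.
elim: n p i => [|n IH] p i /=.
  by case: ifP => [/eqP-> | _]; [exact: bound_zero_ge1 | exact: expR_ge0].
case: ifP => [/eqP-> | /negbT i0]; first exact: bound_zero_ge1.
apply: le_trans (_ : step_mean p (fun c q =>
    bound p i * expR (- (theta * (c%:~R + v q - v p)))) <= _).
  apply: ler_step_mean => c q hc; apply: le_trans (IH q _) _.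
  by rewrite /bound absz_effect // -expRD ler_expR; lra.
by rewrite step_meanZ -[leRHS]mulr1 ler_wpM2l ?expR_ge0.
Qed.

End Supermartingale.

Lemma reach_zero_le_expR theta p0 (c0 : nat) :
  0 <= theta -> theta * (vspan v + 1) <= 1/2 ->
  2 * theta * (vspan v + 1) ^+ 2 <= t ->
  reach_zero Pp p0 c0 <= expR (- (theta * (c0%:R - vspan v))).
Proof.
move=> th0 th1 th2.
pose K := \big[Num.max/v p0]_q v q.
have v_le_K q : v q <= K := le_bigmax _ _ q.
have K_le : K <= v p0 + vspan v.
  apply: bigmax_le; first by have := vspan_ge0; lra.
  by move=> q _; have := vspan_ge q p0; lra.
apply: ge_sup; first by exists (hit Pp 0 p0 c0), 0%N.
have superharmonic p := step_mean_expR_le1 p th0 th1 th2.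
move=> _ [n _ <-]; apply: le_trans (hit_le_bound th0 v_le_K superharmonic n p0 c0) _.
by rewrite ler_expR; nra.
Qed.

End PositiveStep.

Theorem mainTheorem15 (R : realType) (Q : finType)
  (Pz Pp : Q -> int -> Q -> R) (HA : is_pOC Pz Pp)
  (Hsc : strongly_connected Pp)
  (alpha : Q -> R) (Halpha : invariant_dist Pp alpha)
  (Ht : 0 < trend Pp alpha)
  (v : Q -> R) (Hv : potential Pp (trend Pp alpha) v) :
  let t := trend Pp alpha in
  let a := expR (- (t ^+ 2) / (2 * (vspan v + t + 1) ^+ 2)) in
  (0 < a < 1) /\
  forall c0 : nat, vspan v <= c0%:R ->
    (forall p0 : Q, reach_zero Pp p0 c0 <= a ^+ c0 / (1 - a)) /\
    (6 * (vspan v + t + 1) ^+ 3 / t ^+ 3 <= c0%:R ->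
      forall p0 : Q, reach_zero Pp p0 c0 <= 1 / 2).
Proof.
move=> t a.
have [Pp_ge0 Pp_out Pp_sum] : [/\ forall p c q, 0 <= Pp p c q,
    forall p c q, c \notin effects -> Pp p c q = 0 &
    forall p, \sum_(c <- effects) \sum_(q : Q) Pp p c q = 1].
  by case: HA => H _ Hout _ Hsum; split=> // p c q; case: (H p c q).
have s0 := vspan_ge0 v; have t1 := trend_le1 Pp_ge0 Pp_out Pp_sum Halpha.
have th0 := decay_rate_gt0 s0 Ht.
have bound c0 p0 := reach_zero_le_expR Pp_ge0 Pp_out Pp_sum Hv p0 c0
  (ltW th0) (decay_rate_step s0 Ht t1) (decay_rate_drift s0 Ht t1).
have a_decay : a = expR (- decay_rate (vspan v) t) by rewrite /a mulNr.
rewrite a_decay expR_gt0 expR_lt1 oppr_lt0 th0; split=> // c0 _.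
split=> [p0 | c0_large p0]; apply: le_trans (bound c0 p0) _.
- exact: expR_decay_le_geometric.
- exact: expR_decay_le_half.
Qed.
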